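(* Let $R$ be a regular run. Then (1) the term SafeToOpen is discrete; (2) for every $t\ge0$, if SafeToOpen holds at $t+$ then it holds at $t$; (3) if SafeToOpen becomes true at a moment $t$, then TrackStatus$(x)$ becomes empty at $t$ for some track $x$.
   Context: Setting (evolving algebra for the railroad crossing). States are structures over a vocabulary containing: a finite universe Tracks; the reals and ExtendedReals $=\mathbb{R}\cup\{\infty\}$ with standard $<$ and $+$ ($\infty$ largest); a nullary real-valued symbol $\mathrm{CT}$ (current time); positive real constants $d_{close},d_{open},d_{min},d_{max}$ with $d_{close}<d_{min}\le d_{max}$; a unary function TrackStatus from Tracks to $\{\text{empty},\text{coming},\text{incrossing}\}$; a unary function Deadline from Tracks to ExtendedReals; a nullary Dir with values in $\{\text{open},\text{close}\}$; a nullary GateStatus with values in $\{\text{opened},\text{closed}\}$. Put $W=d_{min}-d_{close}$ and $\Delta_{close}=d_{close}+(d_{max}-d_{min})=d_{max}-W$. For a track $x$, $s(x)$ is the condition [$\mathrm{TrackStatus}(x)=\text{empty}$ or $\mathrm{CT}+d_{open}<\mathrm{Deadline}(x)$], and SafeToOpen is $\forall x\in\mathrm{Tracks}\ s(x)$. The program has two modules (agents). Gate: simultaneously OpenGate ''if Dir=open then GateStatus:=opened'' and CloseGate ''if Dir=close then GateStatus:=closed''. Controller: simultaneously, for every track $x$, SetDeadline$(x)$ ''if TrackStatus$(x)$=coming and Deadline$(x)=\infty$ then Deadline$(x):=\mathrm{CT}+W$'', SignalClose$(x)$ ''if $\mathrm{CT}=$Deadline$(x)$ then Dir:=close'', ClearDeadline$(x)$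 ''if TrackStatus$(x)$=empty and Deadline$(x)<\infty$ then Deadline$(x):=\infty$'', together with SignalOpen ''if Dir=close and SafeToOpen then Dir:=open''. Executing a module means computing all updates it generates in the current state and performing them simultaneously (nothing happens if the update set is inconsistent). A module is enabled at a state if its update set is consistent and contains an update that changes the state. TrackStatus is external (changed only by the environment); Deadline, Dir, GateStatus are internal (changed only by the modules); other symbols are static. Runs: for $t\mapsto R(t)$, $t\in[0,\infty)$, let $\rho(t)$ be the reduct of $R(t)$ without CT. $R$ is a pre-run if all $R(t)$ share a superuniverse, $\mathrm{CT}=t$ in $R(t)$, and for every $\tau>0$ there are $0=t_0<\dots<t_n=\tau$ with $\rho$ constant on each $(t_i,t_{i+1})$. For a term $e$ (free variables fixed), $e_t$ is its value in $R(t)$, $e_{t+}$ (resp. $e_{t-}$, $t>0$) its constant value on some $(t,t+\epsilon)$ (resp. $(t-\epsilon,t)$); likewise $\rho(t\pm)$. $e$ holds over an interval if it holds at each point; $e$ becomes (is set to) $a$ at $t$ if $e_{t-}\ne a=e_t$ or $e_t\neq a=e_{t+}$. A moment $t$ is significant for $e$ if every neighbourhood of $t$ contains a moment $a$ with $e_a\ne e_t$; $e$ is discrete if its set of significant moments has no limit point in $[0,\infty)$. A pre-run is a run if (i) whenever $\rho(t+)\neq\rho(t)$, $\rho(t+)$ is the CT-free reduct of the result of executing some modules at $R(t)$ (these agents fire at $t$), with external functions equal in $\rho(t)$ and $\rho(t+)$; (ii) whenever $t>0$ and $\rho(t)\ne\rho(t-)$, they differ only in external functions. An agent is immediate if it fires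 at every moment it is enabled; bounded if immediate or there is $b>0$ with no interval $(t,t+b)$ over which it is enabled but never fires. Initial states: TrackStatus$(x)$=empty and Deadline$(x)=\infty$ for every track $x$. A regular run is a run $R$ with $R(0)$ initial such that: (Train Motion) for each track $x$ there is a finite or infinite sequence $0=t_0<t_1<t_2<\cdots$ (the significant moments of $x$) with TrackStatus$(x)$=empty over each $[t_{3i},t_{3i+1})$, =coming over each $[t_{3i+1},t_{3i+2})$ where $d_{min}\le t_{3i+2}-t_{3i+1}\le d_{max}$, =incrossing over each $[t_{3i+2},t_{3i+3})$, and, if the sequence is finite with last element $t_k$, then $3\mid k$ and TrackStatus$(x)$=empty over $[t_k,\infty)$; (Controller Timing) Controller is immediate; (Gate Timing) Gate is bounded, there is no interval $(t,t+d_{close})$ over which Dir=close and GateStatus=opened both hold, and no interval $(t,t+d_{open})$ over which Dir=open and GateStatus=closed both hold. *)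

From Stdlib Require Import Reals FinFun.
Open Scope R_scope.

Inductive ER : Type := Fin (r : R) | Inf.

Definition ER_lt (a b : ER) : Prop :=
  match a, b with
  | Fin x, Fin y => x < y
  | Fin _, Inf => True
  | Inf, _ => False
  end.

Inductive TStatus : Type := empty | coming | incrossing.
Inductive DirV : Type := open | close.
Inductive GateV : Type := opened | closed.

Record consts : Type := Consts { d_close : R; d_open : R; d_min : R; d_max : R }.

Definition good_consts (c : consts) : Prop :=
  0 < d_close c /\ 0 < d_open c /\ 0 < d_min c /\ 0 < d_max c /\
  d_close c < d_min c /\ d_min c <= d_max c.

Definition W (c : consts) : R := d_min c - d_close c.

(* The CT-free reduct of a state restricted to its dynamic symbols
   (universe and static symbols are fixed parameters). *)
Record state (Tracks : Type) : Type := State {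
  TrackStatus : Tracks -> TStatus;
  Deadline : Tracks -> ER;
  Dir : DirV;
  GateStatus : GateV }.
Arguments State {Tracks}.
Arguments TrackStatus {Tracks}.
Arguments Deadline {Tracks}.
Arguments Dir {Tracks}.
Arguments GateStatus {Tracks}.

Section Program.
Variable Tracks : Type.
Variable c : consts.

(* s(x) and SafeToOpen, evaluated at the state (σ, CT = t). *)
Definition s_cond (σ : state Tracks) (t : R) (x : Tracks) : Prop :=
  TrackStatus σ x = empty \/ ER_lt (Fin (t + d_open c)) (Deadline σ x).

Definition SafeToOpen (σ : state Tracks) (t : R) : Prop :=
  forall x : Tracks, s_cond σ t x.

Inductive update : Type :=
  | UDeadline (x : Tracks) (v : ER)
  | UDir (d : DirV)
  | UGate (g : GateV).

Inductive agent : Type := Gate | Controller.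

Definition gate_updates (σ : state Tracks) (t : R) (u : update) : Prop :=
  (Dir σ = open /\ u = UGate opened) \/ (Dir σ = close /\ u = UGate closed).

Definition controller_updates (σ : state Tracks) (t : R) (u : update) : Prop :=
  (exists x, TrackStatus σ x = coming /\ Deadline σ x = Inf /\
             u = UDeadline x (Fin (t + W c)))
  \/ (exists x, Fin t = Deadline σ x /\ u = UDir close)
  \/ (exists x, TrackStatus σ x = empty /\ ER_lt (Deadline σ x) Inf /\
             u = UDeadline x Inf)
  \/ (Dir σ = close /\ SafeToOpen σ t /\ u = UDir open).

Definition updates_of (a : agent) : state Tracks -> R -> update -> Prop :=
  match a with Gate => gate_updates | Controller => controller_updates end.

Definition consistent (U : update -> Prop) : Prop :=
  (forall x v w, U (UDeadline x v) -> U (UDeadline x w) -> v = w) /\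
  (forall d e, U (UDir d) -> U (UDir e) -> d = e) /\
  (forall g h, U (UGate g) -> U (UGate h) -> g = h).

Definition apply_updates (σ : state Tracks) (U : update -> Prop)
    (σ' : state Tracks) : Prop :=
  TrackStatus σ' = TrackStatus σ /\
  (forall x, (U (UDeadline x (Deadline σ' x))) \/
             ((forall v, ~ U (UDeadline x v)) /\ Deadline σ' x = Deadline σ x)) /\
  (U (UDir (Dir σ')) \/ ((forall d, ~ U (UDir d)) /\ Dir σ' = Dir σ)) /\
  (U (UGate (GateStatus σ')) \/
     ((forall g, ~ U (UGate g)) /\ GateStatus σ' = GateStatus σ)).

(* Executing the set of modules S at the state (σ, CT = t): every module in S
   contributes its update set, unless that update set is inconsistent (then
   that module does nothing); all contributed updates are performed
   simultaneously. (Gate and Controller update disjoint locations.) *)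
Definition exec_updates (S : agent -> Prop) (σ : state Tracks) (t : R)
    (u : update) : Prop :=
  exists a, S a /\ consistent (updates_of a σ t) /\ updates_of a σ t u.

Definition execute (S : agent -> Prop) (σ : state Tracks) (t : R)
    (σ' : state Tracks) : Prop :=
  apply_updates σ (exec_updates S σ t) σ'.

Definition changes (σ : state Tracks) (u : update) : Prop :=
  match u with
  | UDeadline x v => Deadline σ x <> v
  | UDir d => Dir σ <> d
  | UGate g => GateStatus σ <> g
  end.

Definition enabled (a : agent) (σ : state Tracks) (t : R) : Prop :=
  consistent (updates_of a σ t) /\
  exists u, updates_of a σ t u /\ changes σ u.

(* A run is given by ρ : R -> state (the CT-free reduct of R(t); CT(R(t)) = t,
   only t >= 0 is relevant) together with the firing relation. *)

Definition state_plus (ρ : R -> state Tracks) (t : R) (σ : state Tracks) : Prop :=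
  exists eps, 0 < eps /\ forall s, t < s < t + eps -> ρ s = σ.

Definition state_minus (ρ : R -> state Tracks) (t : R) (σ : state Tracks) : Prop :=
  exists eps, 0 < eps <= t /\ forall s, t - eps < s < t -> ρ s = σ.

Definition pre_run (ρ : R -> state Tracks) : Prop :=
  forall tau, 0 < tau ->
  exists (n : nat) (p : nat -> R),
    p 0%nat = 0 /\ p n = tau /\
    (forall i, (i < n)%nat -> p i < p (S i)) /\
    (forall i, (i < n)%nat -> forall s s',
        p i < s < p (S i) -> p i < s' < p (S i) -> ρ s = ρ s').

Definition is_run (ρ : R -> state Tracks) (fires : agent -> R -> Prop) : Prop :=
  pre_run ρ /\
  (forall t σ, 0 <= t -> state_plus ρ t σ -> σ <> ρ t ->
      TrackStatus σ = TrackStatus (ρ t) /\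
      execute (fun a => fires a t) (ρ t) t σ) /\
  (* the agents that fire at t are those of the witnessing set in (i) *)
  (forall a t, fires a t -> 0 <= t /\
      exists σ, state_plus ρ t σ /\ σ <> ρ t) /\
  (forall t σ, 0 < t -> state_minus ρ t σ -> σ <> ρ t ->
      Deadline σ = Deadline (ρ t) /\ Dir σ = Dir (ρ t) /\
      GateStatus σ = GateStatus (ρ t)).

Definition immediate (ρ : R -> state Tracks) (fires : agent -> R -> Prop)
    (a : agent) : Prop :=
  forall t, 0 <= t -> enabled a (ρ t) t -> fires a t.

Definition bounded (ρ : R -> state Tracks) (fires : agent -> R -> Prop)
    (a : agent) : Prop :=
  immediate ρ fires a \/
  exists b, 0 < b /\ forall t, 0 <= t ->
    ~ (forall s, t < s < t + b -> enabled a (ρ s) s /\ ~ fires a s).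

Definition initial (σ : state Tracks) : Prop :=
  forall x, TrackStatus σ x = empty /\ Deadline σ x = Inf.

(* A finite (last index Some k) or infinite (None) sequence ts. *)
Definition idx_ok (N : option nat) (i : nat) : Prop :=
  match N with None => True | Some k => (i <= k)%nat end.

Definition train_motion (ρ : R -> state Tracks) (x : Tracks) : Prop :=
  exists (ts : nat -> R) (N : option nat),
    ts 0%nat = 0 /\
    (forall i, idx_ok N (S i) -> ts i < ts (S i)) /\
    (forall i, idx_ok N (3 * i + 1) -> forall s,
        ts (3 * i)%nat <= s < ts (3 * i + 1)%nat -> TrackStatus (ρ s) x = empty) /\
    (forall i, idx_ok N (3 * i + 2) ->
        (forall s, ts (3 * i + 1)%nat <= s < ts (3 * i + 2)%nat ->
            TrackStatus (ρ s) x = coming) /\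
        d_min c <= ts (3 * i + 2)%nat - ts (3 * i + 1)%nat <= d_max c) /\
    (forall i, idx_ok N (3 * i + 3) -> forall s,
        ts (3 * i + 2)%nat <= s < ts (3 * i + 3)%nat ->
        TrackStatus (ρ s) x = incrossing) /\
    (forall k, N = Some k ->
        (exists j, k = (3 * j)%nat) /\
        forall s, ts k <= s -> TrackStatus (ρ s) x = empty).

Definition regular_run (ρ : R -> state Tracks) (fires : agent -> R -> Prop) : Prop :=
  is_run ρ fires /\ initial (ρ 0) /\
  (forall x, train_motion ρ x) /\
  immediate ρ fires Controller /\
  bounded ρ fires Gate /\
  (forall t, 0 <= t -> ~ (forall s, t < s < t + d_close c ->
        Dir (ρ s) = close /\ GateStatus (ρ s) = opened)) /\
  (forall t, 0 <= t -> ~ (forall s, t < s < t + d_open c ->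
        Dir (ρ s) = open /\ GateStatus (ρ s) = closed)).

End Program.

Definition significant (P : R -> Prop) (t : R) : Prop :=
  forall eps, 0 < eps -> exists a, 0 <= a /\ Rabs (a - t) < eps /\ ~ (P a <-> P t).

Definition discrete (P : R -> Prop) : Prop :=
  forall l, 0 <= l -> exists eps, 0 < eps /\
    forall t, 0 <= t -> significant P t -> 0 < Rabs (t - l) < eps -> False.

Definition holds_plus (P : R -> Prop) (t : R) : Prop :=
  exists eps, 0 < eps /\ forall s, t < s < t + eps -> P s.

Definition becomes_true (P : R -> Prop) (t : R) : Prop :=
  (0 < t /\ (exists eps, 0 < eps <= t /\ forall s, t - eps < s < t -> ~ P s) /\ P t)
  \/ (~ P t /\ holds_plus P t).

Definition becomes {A : Type} (f : R -> A) (a : A) (t : R) : Prop :=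
  (0 < t /\ (exists b eps, b <> a /\ 0 < eps <= t /\
                 forall s, t - eps < s < t -> f s = b) /\ f t = a)
  \/ (f t <> a /\ exists eps, 0 < eps /\ forall s, t < s < t + eps -> f s = a).

From Stdlib Require Import Reals FinFun Lra Lia Classical.
Open Scope R_scope.

(* For a fixed state, SafeToOpen at time t only gets harder as t grows, so on
   an interval where a run is constant it can switch at most once, from true to
   false; since a pre-run is piecewise constant, SafeToOpen is discrete.  At a
   moment where the run changes, the change is either a module step or an
   environment step.  A module step only clears the deadline of an empty track
   or sets a deadline that was infinite, so SafeToOpen after the step implies
   SafeToOpen before it: SafeToOpen never becomes true from the right.  An
   environment step keeps every deadline, so when SafeToOpen becomes true from
   the left, the offending track must have become empty. *)

Section Significance.

Variable P : R -> Prop.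

Lemma not_significant_of_locally_const a b t :
  a < t < b -> (forall s, a < s < b -> (P s <-> P t)) -> ~ significant P t.
Proof.
  intros Ht Hconst Hsig.
  destruct (Hsig (Rmin (t - a) (b - t))) as [s [_ [Hs Hdiff]]].
  { apply Rmin_glb_lt; lra. }
  apply Hdiff, Hconst.
  pose proof (Rmin_l (t - a) (b - t)). pose proof (Rmin_r (t - a) (b - t)).
  apply Rabs_def2 in Hs. lra.
Qed.

Definition antitone_on (lo hi : R) : Prop :=
  forall a b, lo < a -> a <= b < hi -> P b -> P a.

Lemma antitone_on_significant_unique lo hi t1 t2 :
  antitone_on lo hi -> lo < t1 < hi -> lo < t2 < hi ->
  significant P t1 -> significant P t2 -> t1 = t2.
Proof.
  intros Hanti Ht1 Ht2 S1 S2.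
  assert (Hlt : forall u v, lo < u -> u < v -> v < hi ->
                  significant P u -> significant P v -> False).
  { intros u v Hu Huv Hv Su Sv. set (m := (u + v) / 2).
    destruct (classic (P m)) as [Hm | Hm].
    - apply (not_significant_of_locally_const lo m u); [unfold m; lra | | exact Su].
      intros s Hs. split; intros _; apply (Hanti _ m); unfold m in *; auto; lra.
    - apply (not_significant_of_locally_const m hi v); [unfold m; lra | | exact Sv].
      intros s Hs. split; intros HP; exfalso; apply Hm;
        [apply (Hanti m s) | apply (Hanti m v)]; unfold m in *; auto; lra. }
  destruct (total_order_T t1 t2) as [[H | H] | H]; auto; exfalso.
  - apply (Hlt t1 t2); auto; lra.
  - apply (Hlt t2 t1); auto; lra.
Qed.

Lemma antitone_on_significant_at_most_one lo hi :
  lo < hi -> antitone_on lo hi ->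
  exists m, lo < m < hi /\ forall t, lo < t < hi -> significant P t -> t = m.
Proof.
  intros Hlohi Hanti.
  destruct (classic (exists t, lo < t < hi /\ significant P t))
    as [[t0 [Ht0 S0]] | Hnone].
  - exists t0. split; [exact Ht0 |].
    intros t Ht St. exact (antitone_on_significant_unique lo hi t t0 Hanti Ht Ht0 St S0).
  - exists ((lo + hi) / 2). split; [lra |].
    intros t Ht St. exfalso. apply Hnone. exists t. auto.
Qed.

End Significance.

Definition const_on {A : Type} (f : R -> A) (lo hi : R) : Prop :=
  forall s s', lo < s < hi -> lo < s' < hi -> f s = f s'.

Lemma partition_interval n (p : nat -> R) t :
  p 0%nat = 0 -> (forall i, (i < n)%nat -> p i < p (S i)) -> 0 <= t < p n ->
  exists i, (i < n)%nat /\ p i <= t < p (S i).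
Proof.
  revert t. induction n as [| m IH]; intros t H0 Hinc Ht.
  - rewrite H0 in Ht. lra.
  - destruct (Rlt_dec t (p m)) as [Hl | Hl].
    + destruct (IH t H0) as [i [Hi Hb]]; [intros i Hi; apply Hinc; lia | lra |].
      exists i. split; [lia | exact Hb].
    + exists m. split; [lia | lra].
Qed.

Section Crossing.

Variable Tracks : Type.
Variable c : consts.

Section PreRun.

Variable ρ : R -> state Tracks.
Hypothesis Hpre : pre_run Tracks ρ.

Lemma pre_run_const_right t :
  0 <= t -> exists e, 0 < e /\ const_on ρ t (t + e).
Proof.
  intros Ht. destruct (Hpre (t + 1)) as [n [p [H0 [Hn [Hinc Hconst]]]]]; [lra |].
  destruct (partition_interval n p t H0 Hinc) as [i [Hi Hb]]; [lra |].
  exists (p (S i) - t). split; [lra |].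
  intros s s' Hs Hs'. apply (Hconst i Hi); lra.
Qed.

Lemma pre_run_const_left t :
  0 < t -> exists e, 0 < e <= t /\ const_on ρ (t - e) t.
Proof.
  intros Ht. destruct (Hpre t) as [n [p [H0 [Hn [Hinc Hconst]]]]]; [lra |].
  destruct n as [| m]; [rewrite H0 in Hn; lra |].
  assert (Hpm : p m < t) by (rewrite <- Hn; apply Hinc; lia).
  pose proof (Rmin_r t (t - p m)).
  exists (Rmin t (t - p m)). split.
  - split; [apply Rmin_glb_lt; lra | apply Rmin_l].
  - intros s s' Hs Hs'. apply (Hconst m); [lia | |]; rewrite Hn; lra.
Qed.

End PreRun.

Lemma ER_lt_Fin_le a b d : a <= b -> ER_lt (Fin b) d -> ER_lt (Fin a) d.
Proof. destruct d; simpl; auto. intros; lra. Qed.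

Lemma SafeToOpen_antitone σ s t :
  s <= t -> SafeToOpen Tracks c σ t -> SafeToOpen Tracks c σ s.
Proof.
  intros Hst Hsafe x. destruct (Hsafe x) as [He | Hlt]; [left; exact He | right].
  apply (ER_lt_Fin_le _ (t + d_open c)); [lra | exact Hlt].
Qed.

Lemma exec_deadline_update S σ t x v :
  exec_updates Tracks c S σ t (UDeadline Tracks x v) ->
  Deadline σ x = Inf \/ TrackStatus σ x = empty.
Proof.
  intros [[|] [_ [_ Hu]]]; simpl in Hu.
  - destruct Hu as [[_ Hu] | [_ Hu]]; discriminate.
  - destruct Hu as [[y [_ [Hinf Hu]]] | [[y [_ Hu]] | [[y [He [_ Hu]]] | [_ [_ Hu]]]]];
      try discriminate; injection Hu as -> _; auto.
Qed.

Lemma SafeToOpen_of_execute S σ σ' t :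
  execute Tracks c S σ t σ' -> SafeToOpen Tracks c σ' t -> SafeToOpen Tracks c σ t.
Proof.
  intros [HTS [HD _]] Hsafe x. destruct (Hsafe x) as [He | Hlt].
  - left. rewrite <- HTS. exact He.
  - destruct (HD x) as [Hu | [_ Hkeep]].
    + destruct (exec_deadline_update _ _ _ _ _ Hu) as [Hinf | He].
      * right. rewrite Hinf. exact I.
      * left. exact He.
    + right. rewrite <- Hkeep. exact Hlt.
Qed.

Definition SafeToOpen_at (ρ : R -> state Tracks) (t : R) : Prop :=
  SafeToOpen Tracks c (ρ t) t.

Lemma SafeToOpen_at_antitone_on ρ lo hi :
  const_on ρ lo hi -> antitone_on (SafeToOpen_at ρ) lo hi.
Proof.
  intros Hconst a b Ha Hab Hb. unfold SafeToOpen_at in *.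
  rewrite (Hconst a b) by lra. exact (SafeToOpen_antitone _ a b (proj1 Hab) Hb).
Qed.

Lemma SafeToOpen_at_discrete ρ : pre_run Tracks ρ -> discrete (SafeToOpen_at ρ).
Proof.
  intros Hpre l Hl.
  assert (Hright : exists er, 0 < er /\
            forall t, l < t < l + er -> ~ significant (SafeToOpen_at ρ) t).
  { destruct (pre_run_const_right ρ Hpre l Hl) as [e [He Hconst]].
    destruct (antitone_on_significant_at_most_one (SafeToOpen_at ρ) l (l + e)) as [m [Hm Huniq]];
      [lra | exact (SafeToOpen_at_antitone_on ρ _ _ Hconst) |].
    exists (m - l). split; [lra |].
    intros t Ht St. specialize (Huniq t ltac:(lra) St). lra. }
  assert (Hleft : exists el, 0 < el /\
            forall t, 0 <= t -> l - el < t < l -> ~ significant (SafeToOpen_at ρ) t).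
  { destruct (Rle_lt_or_eq_dec 0 l Hl) as [Hpos | <-].
    - destruct (pre_run_const_left ρ Hpre l Hpos) as [e [He Hconst]].
      destruct (antitone_on_significant_at_most_one (SafeToOpen_at ρ) (l - e) l) as [m [Hm Huniq]];
        [lra | exact (SafeToOpen_at_antitone_on ρ _ _ Hconst) |].
      exists (l - m). split; [lra |].
      intros t _ Ht St. specialize (Huniq t ltac:(lra) St). lra.
    - exists 1. split; [lra |]. intros t Ht Htl. lra. }
  destruct Hright as [er [Her Hr]]. destruct Hleft as [el [Hel Hlf]].
  exists (Rmin er el). split; [apply Rmin_glb_lt; lra |].
  intros t Ht St [Hd0 Hd]. apply Rabs_def2 in Hd.
  pose proof (Rmin_l er el). pose proof (Rmin_r er el).
  destruct (total_order_T t l) as [[Htl | ->] | Htl].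
  - apply (Hlf t Ht); [lra | exact St].
  - rewrite Rminus_diag, Rabs_R0 in Hd0. lra.
  - apply (Hr t); [lra | exact St].
Qed.

Section Run.

Variable ρ : R -> state Tracks.
Variable fires : agent -> R -> Prop.
Hypothesis Hrun : is_run Tracks c ρ fires.

Lemma SafeToOpen_at_of_holds_plus t :
  0 <= t -> holds_plus (SafeToOpen_at ρ) t -> SafeToOpen_at ρ t.
Proof.
  destruct Hrun as [Hpre [Hstep _]].
  intros Ht [e [He Hsafe]].
  destruct (pre_run_const_right ρ Hpre t Ht) as [e' [He' Hconst]].
  pose proof (Rmin_l e e'). pose proof (Rmin_r e e').
  set (eps := Rmin e e'). set (s0 := t + eps / 2).
  assert (Heps : 0 < eps) by (apply Rmin_glb_lt; lra).
  assert (Hsafe_t : SafeToOpen Tracks c (ρ s0) t).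
  { apply (SafeToOpen_antitone _ t s0); [unfold s0; lra |].
    apply Hsafe. unfold s0, eps in *; lra. }
  unfold SafeToOpen_at.
  destruct (classic (ρ s0 = ρ t)) as [Heq | Hne]; [rewrite <- Heq; exact Hsafe_t |].
  assert (Hplus : state_plus Tracks ρ t (ρ s0)).
  { exists eps. split; [exact Heps |].
    intros s Hs. apply Hconst; unfold s0, eps in *; lra. }
  destruct (Hstep t (ρ s0) Ht Hplus Hne) as [_ Hexec].
  exact (SafeToOpen_of_execute _ _ _ _ Hexec Hsafe_t).
Qed.

Lemma becomes_empty_of_SafeToOpen_rise t e :
  0 < e <= t -> (forall s, t - e < s < t -> ~ SafeToOpen_at ρ s) ->
  SafeToOpen_at ρ t -> exists x, becomes (fun s => TrackStatus (ρ s) x) empty t.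
Proof.
  destruct Hrun as [Hpre [_ [_ Henv]]].
  intros He Hunsafe Hsafe.
  destruct (pre_run_const_left ρ Hpre t ltac:(lra)) as [e' [He' Hconst]].
  pose proof (Rmin_l e e'). pose proof (Rmin_r e e').
  set (eps := Rmin e e'). set (s0 := t - eps / 2).
  assert (Heps : 0 < eps) by (apply Rmin_glb_lt; lra).
  assert (Hs0 : ~ SafeToOpen_at ρ s0) by (apply Hunsafe; unfold s0, eps in *; lra).
  unfold SafeToOpen_at in *.
  destruct (classic (ρ s0 = ρ t)) as [Heq | Hne].
  { exfalso. apply Hs0. rewrite Heq.
    apply (SafeToOpen_antitone _ s0 t); [unfold s0; lra | exact Hsafe]. }
  assert (Hminus : state_minus Tracks ρ t (ρ s0)).
  { exists eps. split; [unfold eps in *; lra |].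
    intros s Hs. apply Hconst; unfold s0, eps in *; lra. }
  destruct (Henv t (ρ s0) ltac:(lra) Hminus Hne) as [HD _].
  destruct (not_all_ex_not _ _ Hs0) as [x Hx]. exists x.
  destruct (Hsafe x) as [Hempty | Hlt].
  - left. repeat split; [lra | | exact Hempty].
    exists (TrackStatus (ρ s0) x), eps. repeat split; [| lra | unfold eps in *; lra |].
    + intros Hs0e. apply Hx. left. exact Hs0e.
    + intros s Hs. rewrite (Hconst s s0) by (unfold s0, eps in *; lra). reflexivity.
  - exfalso. apply Hx. right. rewrite HD.
    apply (ER_lt_Fin_le _ (t + d_open c)); [unfold s0; lra | exact Hlt].
Qed.

End Run.

End Crossing.

Theorem mainTheorem6 (Tracks : Type) (c : consts)
  (HTfin : Finite Tracks) (Hc : good_consts c)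
  (ρ : R -> state Tracks) (fires : agent -> R -> Prop)
  (Hreg : regular_run Tracks c ρ fires) :
  let STO := fun t => SafeToOpen Tracks c (ρ t) t in
  discrete STO /\
  (forall t, 0 <= t -> holds_plus STO t -> STO t) /\
  (forall t, 0 <= t -> becomes_true STO t ->
     exists x : Tracks, becomes (fun s => TrackStatus (ρ s) x) empty t).
Proof.
  intro STO. change STO with (SafeToOpen_at Tracks c ρ).
  destruct Hreg as [Hrun _].
  pose proof (SafeToOpen_at_of_holds_plus Tracks c ρ fires Hrun) as Hright_closed.
  split; [exact (SafeToOpen_at_discrete Tracks c ρ (proj1 Hrun)) |].
  split; [exact Hright_closed |].
  intros t Ht [[_ [[e [He Hunsafe]] Hsafe]] | [Hunsafe Hplus]].
  - exact (becomes_empty_of_SafeToOpen_rise Tracks c ρ fires Hrun t e He Hunsafe Hsafe).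
  - exfalso. exact (Hunsafe (Hright_closed t Ht Hplus)).
Qed.
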